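(* Let $Q$ be a connected conjunctive query without self-joins such that $Q$ contains no free sequence and the renamed query of $Q$ contains no nested clique. Then $Q$ has the head-domination property.
   Context: A conjunctive query (CQ) without self-joins is $Q(\mathbf{A}) :- R_1(\mathbb{A}_1), \ldots, R_m(\mathbb{A}_m)$ with pairwise distinct relation symbols, $\mathrm{attr}(R_i)=\mathbb{A}_i$, $\mathrm{attr}(Q)=\bigcup_i\mathbb{A}_i$, output attributes $\mathrm{head}(Q)=\mathbf{A}$, $\mathrm{head}(R_i)=\mathrm{head}(Q)\cap\mathrm{attr}(R_i)$. $Q$ is connected if the graph on its relations with edges between relations sharing an attribute is connected. A free sequence of $Q$ is a sequence of attributes $\langle A_1,\ldots,A_k\rangle$ with $A_1,A_k\in\mathrm{head}(Q)$, $A_2,\ldots,A_{k-1}\in\mathrm{attr}(Q)\setminus\mathrm{head}(Q)$, such that for every $i\in[k-1]$ some relation contains $A_i,A_{i+1}$, and no relation contains both $A_1$ and $A_k$. The graph $H_Q$ has the non-output attributes as vertices and an edge between two of them if some relation contains both; if $H_1,\ldots,H_k$ are its connected components, the renamed query $Q'$ has the same output attributes as $Q$, fresh attributes $F_1,\ldots,F_k$, and for each $R_i$ a relation $R_i'$ with $\mathrm{attr}(R_i')=\mathrm{head}(R_i)\cup\{F_j: H_j\cap\mathrm{attr}(R_i)\neq\emptyset\}$. In a CQ $Q''$, a nested clique is a set $P\subseteq\mathrm{attr}(Q'')$ such that each pair of attributes of $P$ occurs together in some relation; $P\cap\mathrm{head}(Q'')\neq\emptyset$ and $P\setminus\mathrm{head}(Q'')\neq\emptyset$;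 and no relation $R_j$ of $Q''$ satisfies $P\cap\mathrm{head}(Q'')\subseteq\mathrm{head}(R_j)$. $G^\exists_Q$ has as vertices the relations with $\mathrm{attr}(R_i)\setminus\mathrm{head}(Q)\neq\emptyset$ and an edge between $R_i,R_j$ if $(\mathrm{attr}(R_i)\cap\mathrm{attr}(R_j))\setminus\mathrm{head}(Q)\neq\emptyset$. A relation $R_i$ is dominant for a set $E$ of relations if $\bigcup_{R_j\in E}\mathrm{head}(R_j)\subseteq\mathrm{head}(R_i)$. $Q$ has the head-domination property if for every connected component $E$ of $G^\exists_Q$ some relation of $Q$ is dominant for $E$. *)

From mathcomp Require Import all_boot.
Set Implicit Arguments. Unset Strict Implicit. Unset Printing Implicit Defensive.

(* A conjunctive query without self-joins: relations are indexed by 'I_nrel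
   (so relation symbols are pairwise distinct by construction); each relation
   R_i has attribute set [atom i]; [headQ] is the set of output attributes. *)
Record cq := CQ {
  attrT : finType;
  nrel : nat;
  atom : 'I_nrel -> {set attrT};
  headQ : {set attrT}
}.

Arguments atom : clear implicits.

Section CQDefs.
Variable Q : cq.
Local Notation T := (attrT Q).
Local Notation I := ('I_(nrel Q)).

Definition attrQ : {set T} := \bigcup_(i : I) atom Q i.
Definition wf_cq : Prop := headQ Q \subset attrQ.
Definition headR (i : I) : {set T} := headQ Q :&: atom Q i.
Definition exQ : {set T} := attrQ :\: headQ Q.
Definition cooccur (x y : T) : bool :=
  [exists i : I, (x \in atom Q i) && (y \in atom Q i)].

Definition share_rel : rel I :=
  fun i j => [exists x : T, (x \in atom Q i) && (x \in atom Q j)].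
Definition connectedQ : Prop := forall i j : I, connect share_rel i j.

(* Free sequence <x; t...> of length k = size t + 1. *)
Definition free_seq (x : T) (t : seq T) : Prop :=
  [/\ x \in headQ Q, last x t \in headQ Q,
      all (fun z => z \in exQ) (behead (belast x t)),
      path cooccur x t
    & ~~ cooccur x (last x t)].
Definition has_free_seq : Prop := exists x t, free_seq x t.

Definition HQ_edge : rel T :=
  fun x y => [&& x \in exQ, y \in exQ & cooccur x y].
Definition HQ_comp (x : T) : {set T} := [set y | connect HQ_edge x y].

(* Renamed query Q': attributes are inl A for output attributes A and
   inr H for a connected component H of H_Q (playing the role of F_H). *)
Definition renamed_atom (i : I) : {set (T + {set T})%type} :=
  (inl @: headR i) :|: (inr @: [set HQ_comp x | x in atom Q i :\: headQ Q]).
Definition renamed : cq :=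
  @CQ (T + {set T})%type (nrel Q) renamed_atom (inl @: headQ Q).

Definition nested_clique (P : {set T}) : Prop :=
  [/\ P \subset attrQ,
      (forall x y, x \in P -> y \in P -> cooccur x y),
      P :&: headQ Q != set0,
      P :\: headQ Q != set0
    & ~~ [exists j : I, P :&: headQ Q \subset headR j]].
Definition has_nested_clique : Prop := exists P, nested_clique P.

Definition Gex_vertex (i : I) : bool := atom Q i :\: headQ Q != set0.
Definition Gex_edge : rel I :=
  fun i j => [exists x : T, [&& x \in atom Q i, x \in atom Q j & x \notin headQ Q]].
Definition Gex_comp (i : I) : {set I} := [set j | Gex_vertex j && connect Gex_edge i j].

Definition dominant (k : I) (E : {set I}) : bool :=
  \bigcup_(j in E) headR j \subset headR k.

Definition head_domination : Prop :=
  forall i : I, Gex_vertex i -> exists k : I, dominant k (Gex_comp i).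
End CQDefs.

From mathcomp Require Import all_boot.
Set Implicit Arguments. Unset Strict Implicit. Unset Printing Implicit Defensive.

(* Let E be a component of G^exists_Q, S the union of the heads of its
   relations, and C the component of H_Q containing their existential
   attributes (a single one, because the relations of E are chained through
   existential attributes).  Two attributes of S are joined through C by a path
   of existential attributes, so in the absence of free sequences they
   co-occur; and F_C (encoded as [inr C]) occurs in the renamed version of
   every relation of E.  Hence S together with F_C is a clique of the renamed
   query; as it is not a nested clique, some relation has all of S in its
   head. *)

Lemma inl_notin_imset_inr (A B : finType) (a : A) (X : {set B}) :
  (inl a \in inr @: X) = false.
Proof. by apply/imsetP => -[]. Qed.

Lemma inr_notin_imset_inl (A B : finType) (b : B) (X : {set A}) :
  (inr b \in inl @: X) = false.
Proof. by apply/imsetP => -[]. Qed.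

Section QueryFacts.
Variable Q : cq.
Local Notation I := ('I_(nrel Q)).

Lemma mem_exQ i y : y \in atom Q i -> y \notin headQ Q -> y \in exQ Q.
Proof. by move=> yi yh; rewrite inE yh; apply/bigcupP; exists i. Qed.

Lemma cooccurC : symmetric (@cooccur Q).
Proof.
by move=> x y; apply/existsP/existsP => -[k /andP [xk yk]]; exists k; rewrite xk yk.
Qed.

Lemma HQ_edge_sym : symmetric (@HQ_edge Q).
Proof. by move=> x y; rewrite /HQ_edge cooccurC andbCA. Qed.

Lemma HQ_connect_sym : connect_sym (@HQ_edge Q).
Proof. exact: sym_connect_sym HQ_edge_sym. Qed.

Lemma HQ_comp_connect x y : connect (@HQ_edge Q) x y -> HQ_comp x = HQ_comp y.
Proof.
by move=> cxy; apply/setP => z; rewrite !inE (same_connect HQ_connect_sym cxy).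
Qed.

Lemma HQ_edge_atom i x y :
  x \in atom Q i :\: headQ Q -> y \in atom Q i :\: headQ Q -> HQ_edge x y.
Proof.
rewrite !inE => /andP [xh xi] /andP [yh yi].
rewrite /HQ_edge (mem_exQ xi xh) (mem_exQ yi yh).
by apply/existsP; exists i; rewrite xi yi.
Qed.

Lemma Gex_connect_HQ i j x y : connect (@Gex_edge Q) i j ->
  x \in atom Q i :\: headQ Q -> y \in atom Q j :\: headQ Q ->
  connect (@HQ_edge Q) x y.
Proof.
case/connectP => p + ->; elim: p i x => [|k p IHp] i x /=.
  by move=> _ xi yi; exact/connect1/(HQ_edge_atom xi yi).
case/andP => /existsP [z /and3P [zi zk zh]] pk xi yj.
have zi' : z \in atom Q i :\: headQ Q by rewrite inE zh zi.
have zk' : z \in atom Q k :\: headQ Q by rewrite inE zh zk.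
exact: connect_trans (connect1 (HQ_edge_atom xi zi')) (IHp k z pk zk' yj).
Qed.

Lemma HQ_path_exQ x p : path (@HQ_edge Q) x p -> all (mem (exQ Q)) p.
Proof. by elim: p x => [|z p IHp] x //= /andP [/and3P [_ -> _] /IHp]. Qed.

Lemma cooccur_heads_HQ_connect j1 j2 a b y1 y2 : ~ has_free_seq Q ->
  a \in headR j1 -> b \in headR j2 ->
  y1 \in atom Q j1 :\: headQ Q -> y2 \in atom Q j2 :\: headQ Q ->
  connect (@HQ_edge Q) y1 y2 -> cooccur a b.
Proof.
rewrite !inE => noFree /andP [ah aj1] /andP [bh bj2].
case/andP => y1h y1j1 /andP [y2h y2j2].
case/connectP => p y1p y2E; apply: contraT => nab; case: noFree.
exists a, (y1 :: rcons p b); split; rewrite /= ?last_rcons ?belast_rcons //=.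
- by rewrite (mem_exQ y1j1 y1h) (HQ_path_exQ y1p).
- rewrite rcons_path -y2E (sub_path _ y1p) => [|u v /and3P []//].
  by apply/andP; split; apply/existsP; [exists j1 | exists j2]; apply/andP.
Qed.

Lemma headR_renamed (j : I) : @headR (renamed Q) j = inl @: @headR Q j.
Proof.
apply/setP => -[a | H].
  rewrite !inE inl_notin_imset_inr !(mem_imset _ _ inl_inj) orbF !inE.
  by rewrite andbA andbb.
by rewrite !inE !inr_notin_imset_inl.
Qed.

Lemma inl_renamed_atom a (j : I) : a \in headR j -> inl a \in @renamed_atom Q j.
Proof. by move=> aj; rewrite inE imset_f. Qed.

End QueryFacts.

Section HeadDomination.
Variable Q : cq.
Local Notation T := (attrT Q).
Local Notation I := ('I_(nrel Q)).

Hypothesis noFree : ~ has_free_seq Q.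

Variables (i : I) (x0 : T).
Hypothesis x0i : x0 \in atom Q i :\: headQ Q.

Let C := HQ_comp x0.
Let S := \bigcup_(j in Gex_comp i) headR j.
Let P : {set T + {set T}} := inl @: S :|: [set inr C].

Lemma Gex_comp_refl : i \in Gex_comp i.
Proof. by rewrite inE connect0 andbT; apply/set0Pn; exists x0. Qed.

Lemma Gex_comp_HQ_connect j : j \in Gex_comp i ->
  exists2 y, y \in atom Q j :\: headQ Q & connect (@HQ_edge Q) x0 y.
Proof.
case/setIdP => /set0Pn [y yj] ij.
by exists y => //; apply: Gex_connect_HQ ij x0i yj.
Qed.

Lemma inr_renamed_atom j : j \in Gex_comp i -> inr C \in @renamed_atom Q j.
Proof.
case/Gex_comp_HQ_connect => y yj x0y; rewrite inE; apply/orP; right.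
by rewrite /C (HQ_comp_connect x0y) !imset_f.
Qed.

Lemma cooccur_Gex_heads a b : a \in S -> b \in S -> cooccur a b.
Proof.
case/bigcupP => j1 /Gex_comp_HQ_connect [y1 y1j1 x0y1] aj1.
case/bigcupP => j2 /Gex_comp_HQ_connect [y2 y2j2 x0y2] bj2.
apply: cooccur_heads_HQ_connect noFree aj1 bj2 y1j1 y2j2 _.
by rewrite -(same_connect (@HQ_connect_sym Q) x0y1).
Qed.

Lemma mem_headQ_Gex_heads a : a \in S -> a \in headQ Q.
Proof. by case/bigcupP => j _; rewrite inE => /andP []. Qed.

Lemma clique_cooccur z w :
  z \in P -> w \in P -> @cooccur (renamed Q) z w.
Proof.
have inl_inr a : a \in S -> @cooccur (renamed Q) (inl a) (inr C).
  case/bigcupP => j jE aj; apply/existsP; exists j.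
  by rewrite inl_renamed_atom // inr_renamed_atom.
rewrite !inE => /orP [/imsetP [a aS ->] | /eqP ->] /orP [/imsetP [b bS ->] | /eqP ->].
- have /existsP [k /andP [ak bk]] := cooccur_Gex_heads aS bS.
  apply/existsP; exists k.
  by rewrite !inl_renamed_atom // inE ?ak ?bk ?mem_headQ_Gex_heads.
- exact: inl_inr.
- by rewrite cooccurC inl_inr.
- by apply/existsP; exists i; rewrite inr_renamed_atom // Gex_comp_refl.
Qed.

Lemma clique_head : P :&: headQ (renamed Q) = inl @: S.
Proof.
apply/setP => -[a | H];
  rewrite !inE ?(mem_imset _ _ inl_inj) ?inr_notin_imset_inl ?andbF //=.
by rewrite orbF andb_idr // => /mem_headQ_Gex_heads.
Qed.

Lemma Gex_comp_dominant :
  ~ has_nested_clique (renamed Q) -> exists k, dominant k (Gex_comp i).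
Proof.
move=> noNested; have [S0 | [a aS]] := set_0Vmem S.
  by exists i; rewrite /dominant -/S S0 sub0set.
have [/existsP [k Pk] | noDom] :=
  boolP [exists k, P :&: headQ (renamed Q) \subset @headR (renamed Q) k].
  exists k; apply/subsetP => b bS.
  move: (subsetP Pk (inl b)).
  by rewrite clique_head headR_renamed !(mem_imset _ _ inl_inj); apply.
case: noNested; exists P; split => //.
- apply/subsetP => z; rewrite !inE => /orP [/imsetP [b /bigcupP [j jE bj] ->] | /eqP ->].
    by apply/bigcupP; exists j; rewrite // inl_renamed_atom.
  by apply/bigcupP; exists i; rewrite ?inr_renamed_atom ?Gex_comp_refl.
- exact: clique_cooccur.
- by rewrite clique_head; apply/set0Pn; exists (inl a); rewrite imset_f.
- by apply/set0Pn; exists (inr C); rewrite !inE inr_notin_imset_inl eqxx orbT.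
Qed.

End HeadDomination.

Theorem lemma29 (Q : cq) :
  wf_cq Q -> connectedQ Q -> ~ has_free_seq Q ->
  ~ has_nested_clique (renamed Q) -> head_domination Q.
Proof.
move=> _ _ noFree noNested i /set0Pn [x0 x0i].
exact (Gex_comp_dominant noFree x0i noNested).
Qed.
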